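(* Let $X$ be a transitive subshift whose language $\mathcal L$ is aperiodic and satisfies RBC, with growth constant $K$. Let $w\in\mathcal L_n$ have minimal valid step $q$ in $\mathcal L$, and let $\mathcal X=\mathcal X_q(w)$ be the set of exit words of $w$ in $\mathcal L$ with step $q$. Then for every $x\in X$ and every $z\in\mathcal X$, $$\mathcal D(w,x)\ge\frac{1}{3K+9}\,\mathcal D(z,x).$$ Moreover, if $\mathcal X$ is finite and nonempty, then for every $x\in X$ there exists $z'\in\mathcal X$ with $$\mathcal D(z',x)\ge\frac{1}{(2K+3)|\mathcal X|}\,\mathcal D(w,x).$$
   Context: Subshift: nonempty closed $X\subseteq\mathcal A^{\mathbb N}$ ($\mathcal A$ finite) with $SX=X$, $S$ the left shift; transitive: for all nonempty open $U,V$ some $S^n(U)\cap V\neq\emptyset$. $\mathcal L$: finite nonempty words occurring in points of $X$; $\mathcal L_n$ those of length $n$. Aperiodic: no $P$ with $w_i=w_{i+P}$ for all $w\in\mathcal L$, $1\le i\le|w|-P$. For $w\in\mathcal L$: $Ex^\ell(w)=\{a:aw\in\mathcal L\}$, $Ex^r(w)=\{b:wb\in\mathcal L\}$; left/right special if these have $\ge2$ elements, bispecial if both; regular bispecial if exactly one $\hat a\in Ex^\ell(w)$ makes $\hat aw$ right special and exactly one $\hat b\in Ex^r(w)$ makes $w\hat b$ left special; RBC: all bispecial words of length $\ge n_0$ (some $n_0$) are regular bispecial; growth constant $K$: $|\mathcal L_{n+1}|-|\mathcal L_n|=K$ for all large $n$. Upper density: for $w\in\mathcal L$ with $n=|w|$,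 $r(w,x,j)=1$ if $x_{[k,k+n-1]}=w$ for some $(j-1)(K+1)n<k\le j(K+1)n$, else $0$; $\mathcal D(w,x)=\limsup_N\frac1N\sum_{j=1}^N r(w,x,j)$. For $n\ge2$, $w\in\mathcal A^n$ and integer $1\le q\le n/2$ with $w_{[q+1,n]}=w_{[1,n-q]}$, $w^{q\ast r}$ is the word of length $n+(r-1)q$ with $(w^{q\ast r})_{[q(i-1)+1,q(i-1)+n]}=w$ for $1\le i\le r$; $q$ is valid for $w$ in $\mathcal L$ if moreover $w^{q\ast2}\in\mathcal L$; minimal valid step = least valid step. An exit word for $w$ with step $q$ is $z=pw^{q\ast r}s$, $r\ge1$, $1\le|p|,|s|\le q$, with $z\in\mathcal L$; $pw^{q\ast r}$ not a suffix of $w^{q\ast(r+1)}$ but $p_{[2,|p|]}w^{q\ast r}$ is; $w^{q\ast r}s$ not a prefix of $w^{q\ast(r+1)}$ but $w^{q\ast r}s_{[1,|s|-1]}$ is (with $p_{[2,1]}$, $s_{[1,0]}$ empty). *)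

From Stdlib Require Import Reals Lia List Classical ClassicalEpsilon ClassicalDescription.
Import ListNotations.

Set Implicit Arguments.

Section Defs.
Variable A : Type.

(* Points of A^N: sequences indexed by nat.  For the density we use the
   1-based convention x = x_1 x_2 ..., with x_k := x (k-1). *)
Definition shift (x : nat -> A) : nat -> A := fun n => x (S n).

Definition agree_upto (x y : nat -> A) (m : nat) : Prop :=
  forall i, (i < m)%nat -> x i = y i.

(* closed in the product topology (A discrete) *)
Definition closed_set (X : (nat -> A) -> Prop) : Prop :=
  forall x, (forall m, exists y, X y /\ agree_upto x y m) -> X x.

Definition subshift (X : (nat -> A) -> Prop) : Prop :=
  (exists x, X x) /\ closed_set X /\
  (forall x, X x -> X (shift x)) /\
  (forall y, X y -> exists x, X x /\ shift x = y).

Definition rel_open (X U : (nat -> A) -> Prop) : Prop :=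
  (forall x, U x -> X x) /\
  (forall x, U x -> exists m, forall y, X y -> agree_upto x y m -> U y).

Definition transitive (X : (nat -> A) -> Prop) : Prop :=
  forall U V, rel_open X U -> rel_open X V ->
    (exists x, U x) -> (exists x, V x) ->
    exists (n : nat) y, U y /\ V (Nat.iter n shift y).

(* w occurs in x at (0-based) position i *)
Definition occurs_at (w : list A) (x : nat -> A) (i : nat) : Prop :=
  forall k, (k < length w)%nat -> nth_error w k = Some (x (i + k)%nat).

Definition lang (X : (nat -> A) -> Prop) (w : list A) : Prop :=
  w <> [] /\ exists x i, X x /\ occurs_at w x i.

Definition aperiodic (X : (nat -> A) -> Prop) : Prop :=
  forall P : nat, (1 <= P)%nat ->
    ~ (forall w, lang X w -> forall i, (i + P < length w)%nat ->
         nth_error w i = nth_error w (i + P)%nat).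

Definition ext_l X (w : list A) (a : A) : Prop := lang X (a :: w).
Definition ext_r X (w : list A) (b : A) : Prop := lang X (w ++ [b]).

Definition left_special X (w : list A) : Prop :=
  exists a b, a <> b /\ ext_l X w a /\ ext_l X w b.
Definition right_special X (w : list A) : Prop :=
  exists a b, a <> b /\ ext_r X w a /\ ext_r X w b.
Definition bispecial X (w : list A) : Prop :=
  left_special X w /\ right_special X w.

Definition regular_bispecial X (w : list A) : Prop :=
  (exists! a, ext_l X w a /\ right_special X (a :: w)) /\
  (exists! b, ext_r X w b /\ left_special X (w ++ [b])).

Definition RBC X : Prop :=
  exists n0 : nat, forall w, lang X w -> (n0 <= length w)%nat ->
    bispecial X w -> regular_bispecial X w.

Definition card_L X (n c : nat) : Prop :=
  exists l : list (list A), NoDup l /\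
    (forall w, In w l <-> (lang X w /\ length w = n)) /\ length l = c.

Definition growth_constant X (K : nat) : Prop :=
  exists N : nat, forall n c1 c2, (N <= n)%nat ->
    card_L X n c1 -> card_L X (S n) c2 -> c2 = (c1 + K)%nat.

(* r(w,x,j) = 1 iff x_[k,k+n-1] = w for some (j-1)(K+1)n < k <= j(K+1)n
   (1-based k, i.e. 0-based position k-1) *)
Definition r_prop (K : nat) (w : list A) (x : nat -> A) (j : nat) : Prop :=
  exists k : nat,
    ((j - 1) * (K + 1) * length w < k)%nat /\ (k <= j * (K + 1) * length w)%nat /\
    occurs_at w x (k - 1).

Definition r (K : nat) (w : list A) (x : nat -> A) (j : nat) : nat :=
  if excluded_middle_informative (r_prop K w x j) then 1%nat else 0%nat.

Fixpoint rsum (K : nat) (w : list A) (x : nat -> A) (N : nat) : nat :=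
  match N with
  | O => O
  | S N' => (rsum K w x N' + r K w x (S N'))%nat
  end.

Definition avg (K : nat) (w : list A) (x : nat -> A) (N : nat) : R :=
  INR (rsum K w x N) / INR N.

End Defs.

Definition is_limsup (u : nat -> R) (l : R) : Prop :=
  (forall eps : R, (0 < eps)%R -> exists N, forall n, (N <= n)%nat -> (u n < l + eps)%R) /\
  (forall eps : R, (0 < eps)%R -> forall N, exists n, (N <= n)%nat /\ (l - eps < u n)%R).

Definition limsup (u : nat -> R) : R := epsilon (inhabits 0%R) (is_limsup u).

Definition Dens {A : Type} (K : nat) (w : list A) (x : nat -> A) : R :=
  limsup (avg K w x).

Section Words.
Variable A : Type.

Definition qperiodic (w : list A) (q : nat) : Prop :=
  forall i, (i + q < length w)%nat -> nth_error w i = nth_error w (i + q)%nat.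

(* w^{q*r} for q-periodic w: (r-1) copies of w_[1,q] followed by w; this is
   the word of length n+(r-1)q having w at positions q(i-1)+1 .. q(i-1)+n. *)
Definition qpow (w : list A) (q r : nat) : list A :=
  concat (repeat (firstn q w) (r - 1)) ++ w.

Definition step_ok (w : list A) (q : nat) : Prop :=
  (2 <= length w)%nat /\ (1 <= q)%nat /\ (2 * q <= length w)%nat /\ qperiodic w q.

Definition valid_step X (w : list A) (q : nat) : Prop :=
  step_ok w q /\ lang X (qpow w q 2).

Definition min_valid_step X (w : list A) (q : nat) : Prop :=
  valid_step X w q /\ forall q', valid_step X w q' -> (q <= q')%nat.

Definition is_suffix (u v : list A) : Prop := exists t, t ++ u = v.
Definition is_prefix (u v : list A) : Prop := exists t, u ++ t = v.

Definition exit_word X (w : list A) (q : nat) (z : list A) : Prop :=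
  exists (p s : list A) (r : nat),
    (1 <= r)%nat /\
    (1 <= length p <= q)%nat /\ (1 <= length s <= q)%nat /\
    z = p ++ qpow w q r ++ s /\ lang X z /\
    ~ is_suffix (p ++ qpow w q r) (qpow w q (S r)) /\
    is_suffix (tl p ++ qpow w q r) (qpow w q (S r)) /\
    ~ is_prefix (qpow w q r ++ s) (qpow w q (S r)) /\
    is_prefix (qpow w q r ++ removelast s) (qpow w q (S r)).

End Words.

From Stdlib Require Import Reals Arith List Lia Lra.
From Stdlib Require Import Classical ClassicalEpsilon ClassicalDescription.
From Coquelicot Require Lim_seq.
Import ListNotations.
Set Implicit Arguments.

(* Its exit words are the
   words [p w^{q*r} s] that continue [w] [q]-periodically by fewer than [q] letters on each
   side and then break the periodicity.

   1. Combinatorics: an occurrence of an exit word carries [r] occurrences of [w], [q] apart,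
      and its two end letters break [q]-periodicity; conversely, the maximal [q]-periodic
      stretch of a point around an occurrence of [w] is the inside of an exit word occurrence.
   2. Dynamics: in a transitive subshift whose exit words of [w] have length at most [R], the
      power [w^{q*(R+1)}] is not in the language (glue an exit word, this power and the exit
      word again into one point and read off a longer exit word); hence every occurrence of
      [w] away from the origin is covered by an occurrence of an exit word.
   3. Double counting of blocks: (1) gives [H * #z-blocks <= 2 * #w-blocks] with
      [H = 1 + (r-1)q/L_w], and (2) gives [#w-blocks <= const + Σ_z C_z * #z-blocks].
   4. Generic transfer lemmas for limsups of frequencies turn these counts into the two
      density inequalities, with constants [1/(3K+9)] and [1/(3|X|) >= 1/((2K+3)|X|)]. *)

Definition periodic_on {T : Type} (f : nat -> T) (q a b : nat) : Prop :=
  forall k, (a <= k)%nat -> (k + q < b)%nat -> f k = f (k + q)%nat.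

Lemma periodic_on_mult {T : Type} (f : nat -> T) q a b d u :
  periodic_on f q a b -> (a <= u)%nat -> (u + d * q < b)%nat -> f u = f (u + d * q)%nat.
Proof.
  intros Hper. revert u. induction d as [|d IH]; intros u Hu Hb.
  - f_equal. lia.
  - rewrite (Hper u Hu) by lia. rewrite (IH (u + q)%nat) by lia. f_equal. lia.
Qed.

Lemma periodic_on_mod {T : Type} (f : nat -> T) q a b u v :
  periodic_on f q a b -> (1 <= q)%nat -> (a <= u < b)%nat -> (a <= v < b)%nat ->
  u mod q = v mod q -> f u = f v.
Proof.
  intros Hper Hq. revert u v.
  assert (Hle : forall u v, (u <= v)%nat -> (a <= u < b)%nat -> (v < b)%nat ->
            u mod q = v mod q -> f u = f v).
  { intros u v Huv Hu Hv Hm.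
    pose proof (Nat.div_mod_eq u q). pose proof (Nat.div_mod_eq v q).
    assert (Hd : v = (u + (v / q - u / q) * q)%nat) by nia.
    rewrite Hd. apply (periodic_on_mult (v / q - u / q) Hper); lia. }
  intros u v Hu Hv Hm. destruct (Nat.le_gt_cases u v).
  - apply Hle; lia.
  - symmetry. apply Hle; lia.
Qed.

Lemma qperiodic_periodic_on {A : Type} (w : list A) q :
  qperiodic w q <-> periodic_on (nth_error w) q 0 (length w).
Proof. split; intros H k; [intros _|]; apply H; lia. Qed.

Lemma length_concat_repeat {A : Type} (u : list A) c :
  length (concat (repeat u c)) = (c * length u)%nat.
Proof. induction c as [|c IH]; simpl; [lia|]. rewrite length_app, IH. lia. Qed.

Lemma nth_concat_repeat {A : Type} (u : list A) c k :
  (k < c * length u)%nat ->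
  nth_error (concat (repeat u c)) k = nth_error u (k mod length u).
Proof.
  revert k. induction c as [|c IH]; intros k Hk; simpl in *; [lia|].
  destruct (Nat.lt_ge_cases k (length u)).
  - rewrite nth_error_app1, Nat.mod_small; auto.
  - rewrite nth_error_app2, IH by lia.
    replace k with ((k - length u) + 1 * length u)%nat at 2 by lia.
    rewrite Nat.Div0.mod_add. reflexivity.
Qed.

Lemma length_qpow {A : Type} (w : list A) q r :
  (q <= length w)%nat -> length (qpow w q r) = ((r - 1) * q + length w)%nat.
Proof.
  intros H. unfold qpow. rewrite length_app, length_concat_repeat, length_firstn.
  rewrite Nat.min_l by exact H. reflexivity.
Qed.

Lemma nth_qpow {A : Type} (w : list A) q r k :
  qperiodic w q -> (1 <= q <= length w)%nat -> (k < length (qpow w q r))%nat ->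
  nth_error (qpow w q r) k = nth_error w (k mod q).
Proof.
  intros Hper Hq Hk. rewrite length_qpow in Hk by lia. unfold qpow.
  assert (Hfq : length (firstn q w) = q) by (rewrite length_firstn; lia).
  assert (Hmod : (k mod q < q)%nat) by (apply Nat.mod_upper_bound; lia).
  destruct (Nat.lt_ge_cases k ((r - 1) * q)).
  - rewrite nth_error_app1 by (rewrite length_concat_repeat; lia).
    rewrite nth_concat_repeat, Hfq, nth_error_firstn by lia.
    destruct (Nat.ltb_spec (k mod q) q); [reflexivity | lia].
  - rewrite nth_error_app2 by (rewrite length_concat_repeat; lia).
    rewrite length_concat_repeat, Hfq.
    apply qperiodic_periodic_on in Hper.
    apply (periodic_on_mod Hper); try lia.
    rewrite Nat.Div0.mod_mod, <- (Nat.Div0.mod_add (k - (r - 1) * q) (r - 1) q). f_equal. lia.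
Qed.

Lemma is_prefix_nth {A : Type} (u v : list A) :
  is_prefix u v <->
  (length u <= length v)%nat /\ forall k, (k < length u)%nat -> nth_error u k = nth_error v k.
Proof.
  split.
  - intros [t <-]. rewrite length_app. split; [lia|]. intros k Hk. rewrite nth_error_app1; auto.
  - intros [Hl Hnth]. exists (skipn (length u) v). apply nth_error_ext. intros k.
    destruct (Nat.lt_ge_cases k (length u)).
    + rewrite nth_error_app1; auto.
    + rewrite nth_error_app2, nth_error_skipn by lia. f_equal. lia.
Qed.

Lemma is_suffix_nth {A : Type} (u v : list A) :
  is_suffix u v <->
  (length u <= length v)%nat /\
  forall k, (k < length u)%nat -> nth_error u k = nth_error v (length v - length u + k).
Proof.
  split.
  - intros [t <-]. rewrite length_app. split; [lia|]. intros k Hk.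
    rewrite nth_error_app2 by lia. f_equal. lia.
  - intros [Hl Hnth]. exists (firstn (length v - length u) v).
    assert (Hf : length (firstn (length v - length u) v) = (length v - length u)%nat)
      by (rewrite length_firstn; lia).
    apply nth_error_ext. intros k. destruct (Nat.lt_ge_cases k (length v - length u)).
    + rewrite nth_error_app1, nth_error_firstn by lia.
      destruct (Nat.ltb_spec k (length v - length u)); [reflexivity|lia].
    + rewrite nth_error_app2, Hf by lia.
      destruct (Nat.lt_ge_cases (k - (length v - length u)) (length u)).
      * rewrite Hnth by lia. f_equal. lia.
      * rewrite (proj2 (nth_error_None u _)), (proj2 (nth_error_None v k)) by lia. reflexivity.
Qed.

Definition word_of {A : Type} (x : nat -> A) (c L : nat) : list A := map x (seq c L).

Lemma length_word_of {A : Type} (x : nat -> A) c L : length (word_of x c L) = L.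
Proof. unfold word_of. rewrite length_map, length_seq. reflexivity. Qed.

Lemma nth_word_of {A : Type} (x : nat -> A) c L k :
  (k < L)%nat -> nth_error (word_of x c L) k = Some (x (c + k)%nat).
Proof.
  intros H. unfold word_of. rewrite nth_error_map, nth_error_seq.
  destruct (Nat.ltb_spec k L); [reflexivity | lia].
Qed.

Lemma word_of_app {A : Type} (x : nat -> A) c L1 L2 :
  word_of x c (L1 + L2) = word_of x c L1 ++ word_of x (c + L1) L2.
Proof. unfold word_of. rewrite seq_app, map_app. reflexivity. Qed.

Lemma word_of_join {A : Type} (x : nat -> A) c L1 c' L2 :
  c' = (c + L1)%nat -> word_of x c L1 ++ word_of x c' L2 = word_of x c (L1 + L2).
Proof. intros ->. symmetry. apply word_of_app. Qed.

Lemma occurs_word_of {A : Type} (x : nat -> A) c L : occurs_at (word_of x c L) x c.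
Proof. intros k Hk. rewrite length_word_of in Hk. apply nth_word_of, Hk. Qed.

Lemma word_of_nonnil {A : Type} (x : nat -> A) c L : (1 <= L)%nat -> word_of x c L <> [].
Proof.
  intros H E. apply (f_equal (@length A)) in E. rewrite length_word_of in E. simpl in E. lia.
Qed.

Lemma occurs_app {A : Type} (u v : list A) x c :
  occurs_at (u ++ v) x c <-> occurs_at u x c /\ occurs_at v x (c + length u).
Proof.
  unfold occurs_at. rewrite length_app. split.
  - intros H. split.
    + intros k Hk. rewrite <- H by lia. rewrite nth_error_app1; auto.
    + intros k Hk. rewrite <- Nat.add_assoc, <- H by lia.
      rewrite nth_error_app2 by lia. f_equal. lia.
  - intros [H1 H2] k Hk. destruct (Nat.lt_ge_cases k (length u)).
    + rewrite nth_error_app1; auto.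
    + rewrite nth_error_app2, H2 by lia. f_equal. f_equal. lia.
Qed.

Definition exit_shape {A : Type} (w : list A) (q : nat) (z : list A) : Prop :=
  exists (p s : list A) (r : nat),
    (1 <= r)%nat /\
    (1 <= length p <= q)%nat /\ (1 <= length s <= q)%nat /\
    z = p ++ qpow w q r ++ s /\
    ~ is_suffix (p ++ qpow w q r) (qpow w q (S r)) /\
    is_suffix (tl p ++ qpow w q r) (qpow w q (S r)) /\
    ~ is_prefix (qpow w q r ++ s) (qpow w q (S r)) /\
    is_prefix (qpow w q r ++ removelast s) (qpow w q (S r)).

Lemma exit_word_iff {A : Type} (X : (nat -> A) -> Prop) w q z :
  exit_word X w q z <-> exit_shape w q z /\ lang X z.
Proof.
  split.
  - intros (p & s & r & H1 & H2 & H3 & H4 & H5 & H6); split; [|exact H5].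
    exists p, s, r. tauto.
  - intros [(p & s & r & H1 & H2 & H3 & H4 & H6) H5]. exists p, s, r. tauto.
Qed.

Section ExitWords.
Variables (A : Type) (w : list A) (q : nat).
Hypotheses (Hper : qperiodic w q) (Hq : (1 <= q)%nat) (H2q : (2 * q <= length w)%nat).

Lemma nth_w_mod k : (k < length w)%nat -> nth_error w k = nth_error w (k mod q).
Proof.
  intros Hk. apply qperiodic_periodic_on in Hper.
  assert (Hm : (k mod q < q)%nat) by (apply Nat.mod_upper_bound; lia).
  apply (periodic_on_mod Hper); try lia. rewrite Nat.Div0.mod_mod. reflexivity.
Qed.

Lemma qpow_shift r k :
  (k + q < length (qpow w q r))%nat -> nth_error (qpow w q r) k = nth_error (qpow w q r) (k + q).
Proof.
  intros Hk. rewrite !nth_qpow by (auto; lia).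
  rewrite <- (Nat.Div0.mod_add k 1 q), Nat.mul_1_l. reflexivity.
Qed.

Lemma qpow_in_run (y : nat -> A) a b i R idx pos d :
  periodic_on y q a b -> occurs_at w y i -> (a <= i)%nat -> (i + length w <= b)%nat ->
  (idx < length (qpow w q R))%nat -> (a <= pos < b)%nat -> (i + idx = pos + d * q)%nat ->
  nth_error (qpow w q R) idx = Some (y pos).
Proof.
  intros Hrun Hocc Hai Hib Hidx Hpos Hd. rewrite nth_qpow by (auto; lia).
  assert (Hm : (idx mod q < q)%nat) by (apply Nat.mod_upper_bound; lia).
  rewrite Hocc by lia. f_equal. apply (periodic_on_mod Hrun); try lia.
  rewrite Nat.Div0.add_mod_idemp_r, Hd, Nat.Div0.mod_add. reflexivity.
Qed.

Lemma exit_decomp z :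
  exit_shape w q z -> exists lp ls r, (1 <= r)%nat /\ (1 <= lp <= q)%nat /\ (1 <= ls <= q)%nat /\
   length z = (lp + ((r - 1) * q + length w) + ls)%nat /\
   forall (x : nat -> A) c, occurs_at z x c ->
     forall t, (t < r)%nat -> occurs_at w x (c + lp + t * q).
Proof.
  intros (p & s & r & Hr & Hlp & Hls & -> & _).
  exists (length p), (length s), r. repeat split; try lia.
  - rewrite !length_app, length_qpow by lia. lia.
  - intros x c Hc t Ht k Hk.
    apply occurs_app in Hc as [_ Hc]. apply occurs_app in Hc as [Hc _].
    rewrite nth_w_mod, <- (Nat.Div0.mod_add k t q), <- nth_qpow with (r := r) by (auto; try lia;
      rewrite length_qpow by lia; nia).
    replace (c + length p + t * q + k)%nat with (c + length p + (k + t * q))%nat by lia.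
    apply Hc. rewrite length_qpow by lia. nia.
Qed.

Lemma exit_left_break z (y : nat -> A) c :
  exit_shape w q z -> occurs_at z y c -> y c <> y (c + q)%nat.
Proof.
  intros (p & s & r & Hr & Hlp & Hls & -> & Hnsuf & Hsuf & _) Hocc Heq. apply Hnsuf.
  set (Q := qpow w q r) in *. set (V := qpow w q (S r)) in *.
  assert (HQ : length Q = ((r - 1) * q + length w)%nat) by (apply length_qpow; lia).
  assert (HV : length V = (length Q + q)%nat) by (unfold V; rewrite length_qpow by lia; nia).
  rewrite app_assoc in Hocc. apply occurs_app in Hocc as [Hocc _].
  destruct p as [|p0 p']; [simpl in Hlp; lia|]. simpl in Hsuf, Hlp.
  apply is_suffix_nth in Hsuf as [_ Hsuf]. rewrite length_app in Hsuf.
  apply is_suffix_nth. rewrite length_app. simpl length. split; [lia|]. intros k Hk.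
  destruct k as [|k].
  - assert (E0 := Hocc 0%nat ltac:(rewrite length_app; simpl; lia)).
    assert (Eq := Hocc q ltac:(rewrite length_app; simpl; lia)).
    assert (Es := Hsuf (q - 1)%nat ltac:(lia)).
    simpl in E0 |- *. rewrite E0, Nat.add_0_r, Heq.
    unfold V. rewrite qpow_shift by (fold V; lia). fold V.
    replace (length V - S (length p' + length Q) + 0 + q)%nat
      with (length V - (length p' + length Q) + (q - 1))%nat by lia.
    rewrite <- Es, <- Eq. replace q with (S (q - 1)) at 1 by lia. reflexivity.
  - simpl. rewrite Hsuf by lia. f_equal. lia.
Qed.

Lemma exit_right_break z (y : nat -> A) c :
  exit_shape w q z -> occurs_at z y c ->
  y (c + length z - 1)%nat <> y (c + length z - 1 - q)%nat.
Proof.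
  intros (p & s & r & Hr & Hlp & Hls & -> & _ & _ & Hnpre & Hpre) Hocc Heq. apply Hnpre.
  set (Q := qpow w q r) in *. set (V := qpow w q (S r)) in *.
  assert (HQ : length Q = ((r - 1) * q + length w)%nat) by (apply length_qpow; lia).
  assert (HV : length V = (length Q + q)%nat) by (unfold V; rewrite length_qpow by lia; nia).
  apply occurs_app in Hocc as [_ Hocc].
  assert (Hs : s = removelast s ++ [last s (y 0%nat)])
    by (apply app_removelast_last; intros ->; simpl in Hls; lia).
  assert (Hls' : length s = S (length (removelast s)))
    by (rewrite Hs at 1; rewrite length_app; simpl; lia).
  apply is_prefix_nth in Hpre as [_ Hpre]. rewrite length_app in Hpre.
  assert (Hlow : forall k, (k < length Q + length (removelast s))%nat ->
                 nth_error (Q ++ s) k = nth_error V k).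
  { intros k Hk. rewrite <- Hpre by lia. rewrite Hs at 1.
    rewrite app_assoc, nth_error_app1; [reflexivity | rewrite length_app; lia]. }
  apply is_prefix_nth. rewrite length_app. split; [lia|]. intros k Hk.
  destruct (Nat.lt_ge_cases k (length Q + length (removelast s))); [auto|].
  replace k with (k - q + q)%nat at 2 by lia.
  unfold V. rewrite <- qpow_shift by (fold V; lia). fold V.
  rewrite <- Hlow by lia. rewrite !Hocc by (rewrite length_app; lia).
  rewrite !length_app in Heq. f_equal.
  replace (c + length p + k)%nat with (c + (length p + (length Q + length s)) - 1)%nat by lia.
  rewrite Heq. f_equal. lia.
Qed.

Lemma run_left_end (y : nat -> A) a b i t d R :
  periodic_on y q a b -> occurs_at w y i -> (1 <= a)%nat -> (i + length w <= b)%nat ->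
  (t < q)%nat -> (i = a + t + d * q)%nat -> (1 <= R)%nat ->
  (a + t + length (qpow w q R) <= b)%nat -> y (a - 1)%nat <> y (a - 1 + q)%nat ->
  ~ is_suffix (word_of y (a - 1) (t + 1 + length (qpow w q R))) (qpow w q (S R)) /\
  is_suffix (word_of y a (t + length (qpow w q R))) (qpow w q (S R)).
Proof.
  intros Hrun Hocc Ha Hb Ht Hi HR Hfit Hl.
  assert (HV : length (qpow w q (S R)) = (length (qpow w q R) + q)%nat)
    by (rewrite !length_qpow by lia; nia).
  split.
  - intros Hsuf. apply Hl. apply is_suffix_nth in Hsuf as [_ Hsuf]. specialize (Hsuf 0%nat).
    rewrite length_word_of, HV, nth_word_of, Nat.add_0_r in Hsuf by lia.
    rewrite (@qpow_in_run y a b i (S R) _ (a - 1 + q) d Hrun Hocc) in Hsuf by lia.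
    symmetry. injection Hsuf; auto. lia.
  - apply is_suffix_nth. rewrite length_word_of, HV. split; [lia|]. intros k Hk.
    rewrite nth_word_of by lia. symmetry.
    apply (@qpow_in_run y a b i (S R) _ (a + k) (S d) Hrun Hocc); lia.
Qed.

Lemma run_right_end (y : nat -> A) a b i st d R t2 :
  periodic_on y q a b -> occurs_at w y i -> (a <= st)%nat -> (i + length w <= b)%nat ->
  (i = st + d * q)%nat -> (1 <= R)%nat -> (b = st + length (qpow w q R) + t2)%nat ->
  (t2 < q)%nat -> y b <> y (b - q)%nat ->
  ~ is_prefix (word_of y st (length (qpow w q R) + (t2 + 1))) (qpow w q (S R)) /\
  is_prefix (word_of y st (length (qpow w q R) + t2)) (qpow w q (S R)).
Proof.
  intros Hrun Hocc Hst Hb Hi HR Hb2 Ht2 Hr.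
  set (L := length (qpow w q R)) in *.
  assert (HV : length (qpow w q (S R)) = (L + q)%nat)
    by (unfold L; rewrite !length_qpow by lia; nia).
  assert (HL : (length w <= L)%nat) by (unfold L; rewrite length_qpow by lia; nia).
  split.
  - intros Hpre. apply Hr.
    apply is_prefix_nth in Hpre as [_ Hpre]. rewrite length_word_of in Hpre.
    assert (E1 := Hpre (L + t2)%nat ltac:(lia)). assert (E2 := Hpre (L + t2 - q)%nat ltac:(lia)).
    replace (L + t2)%nat with (L + t2 - q + q)%nat in E1 by lia.
    rewrite <- qpow_shift in E1 by lia.
    rewrite <- E1, !nth_word_of in E2 by lia. injection E2. intros E.
    replace b with (st + (L + t2 - q + q))%nat by lia. rewrite <- E. f_equal. lia.
  - apply is_prefix_nth. rewrite length_word_of, HV. split; [lia|]. intros k Hk.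
    rewrite nth_word_of by lia. symmetry.
    apply (@qpow_in_run y a b i (S R) _ (st + k) d Hrun Hocc); lia.
Qed.

(* A maximal [q]-periodic stretch [[a, b)] of a point around an occurrence of [w] is the inside
   of an occurrence of an exit word, whose ends are the breaks at [a - 1] and [b]: the power
   [w^{q*r}] aligned with [w] is preceded by [t + 1 <= q] and followed by [t2 + 1 <= q]
   letters of the stretch. *)
Lemma exit_from_run (y : nat -> A) a b i :
  (1 <= a <= i)%nat -> (i + length w <= b)%nat -> occurs_at w y i ->
  periodic_on y q a b -> y (a - 1)%nat <> y (a - 1 + q)%nat -> y b <> y (b - q)%nat ->
  exit_shape w q (word_of y (a - 1) (b - a + 2)).
Proof.
  intros Ha Hb Hocc Hrun Hl Hr.
  set (n := length w) in *.
  set (t := ((i - a) mod q)%nat). set (d1 := ((i - a) / q)%nat).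
  assert (Hi : (i = a + t + d1 * q)%nat)
    by (pose proof (Nat.div_mod_eq (i - a) q); unfold t, d1; lia).
  assert (Ht : (t < q)%nat) by (apply Nat.mod_upper_bound; lia).
  set (st := (a + t)%nat).
  set (t2 := ((b - st - n) mod q)%nat). set (d2 := ((b - st - n) / q)%nat).
  assert (Ht2 : (t2 < q)%nat) by (apply Nat.mod_upper_bound; lia).
  set (L := length (qpow w q (S d2))).
  assert (Hb2 : (b = st + L + t2)%nat).
  { pose proof (Nat.div_mod_eq (b - st - n) q). unfold L. rewrite length_qpow by lia.
    unfold t2, d2 in *. replace (S ((b - st - n) / q) - 1)%nat with ((b - st - n) / q)%nat by lia.
    lia. }
  assert (Hpow : qpow w q (S d2) = word_of y st L).
  { apply nth_error_ext. intros k. destruct (Nat.lt_ge_cases k L).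
    - rewrite nth_word_of by auto. apply (@qpow_in_run y a b i (S d2) k (st + k) d1); auto; lia.
    - rewrite (proj2 (nth_error_None _ k)) by lia.
      symmetry. apply nth_error_None. rewrite length_word_of. lia. }
  destruct (@run_left_end y a b i t d1 (S d2)) as [Hnsuf Hsuf]; auto; try lia.
  destruct (@run_right_end y a b i st d1 (S d2) t2) as [Hnpre Hpre]; auto; try lia.
  fold L in Hnsuf, Hsuf, Hnpre, Hpre.
  exists (word_of y (a - 1) (t + 1)), (word_of y (st + L) (t2 + 1)), (S d2).
  rewrite Hpow, !length_word_of. repeat split; try lia.
  - rewrite !word_of_join by lia. f_equal. lia.
  - rewrite word_of_join by lia. exact Hnsuf.
  - replace (tl (word_of y (a - 1) (t + 1))) with (word_of y a t)
      by (unfold word_of; rewrite Nat.add_1_r; simpl; do 2 f_equal; lia).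
    rewrite word_of_join by lia. exact Hsuf.
  - rewrite word_of_join by lia. exact Hnpre.
  - replace (removelast (word_of y (st + L) (t2 + 1))) with (word_of y (st + L) t2)
      by (rewrite word_of_app; unfold word_of at 2; simpl; symmetry; apply removelast_last).
    rewrite word_of_join by lia. exact Hpre.
Qed.
End ExitWords.

Lemma last_below (P : nat -> Prop) N : (exists k, (k < N)%nat /\ P k) ->
  exists k, (k < N)%nat /\ P k /\ forall k', (k < k' < N)%nat -> ~ P k'.
Proof.
  induction N as [|N IH]; intros [k [Hk HP]]; [lia|].
  destruct (classic (P N)) as [HN|HN].
  - exists N. repeat split; auto. lia.
  - destruct IH as [k0 [Hk0 [HP0 Hlast]]].
    + exists k. split; auto. assert (k <> N) by (intros ->; auto). lia.
    + exists k0. repeat split; auto. intros k' Hk'.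
      destruct (Nat.eq_dec k' N) as [->|]; auto. apply Hlast. lia.
Qed.

Lemma first_above (P : nat -> Prop) lo : (exists k, (lo <= k)%nat /\ P k) ->
  exists k, (lo <= k)%nat /\ P k /\ forall k', (lo <= k' < k)%nat -> ~ P k'.
Proof.
  intros [k [Hk HP]].
  destruct (@last_below (fun j => P (k - j)%nat) (S (k - lo))) as [j [Hj [HPj Hlast]]].
  { exists 0%nat. rewrite Nat.sub_0_r. split; [lia | exact HP]. }
  exists (k - j)%nat. repeat split; auto; [lia|]. intros k' Hk' HPk'.
  apply (Hlast (k - k')%nat); [lia|]. replace (k - (k - k'))%nat with k' by lia. exact HPk'.
Qed.

Definition left_break {A : Type} (y : nat -> A) (q k : nat) : Prop := y k <> y (k + q)%nat.
Definition right_break {A : Type} (y : nat -> A) (q k : nat) : Prop := y k <> y (k - q)%nat.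

Lemma periodic_on_occurs {A : Type} (u : list A) q (y : nat -> A) c :
  qperiodic u q -> occurs_at u y c -> periodic_on y q c (c + length u).
Proof.
  intros Hu Hocc k Hk1 Hk2. assert (E1 := Hocc (k - c)%nat ltac:(lia)).
  assert (E2 := Hocc (k - c + q)%nat ltac:(lia)). rewrite Hu in E1 by lia.
  rewrite E1 in E2. injection E2 as E2.
  replace (k + q)%nat with (c + (k - c + q))%nat by lia. rewrite <- E2. f_equal. lia.
Qed.

Section Runs.
Variables (A : Type) (w : list A) (q : nat).
Hypotheses (Hper : qperiodic w q) (Hq : (1 <= q)%nat) (H2q : (2 * q <= length w)%nat).

Lemma qpow_qperiodic R : qperiodic (qpow w q R) q.
Proof. intros k Hk. apply qpow_shift; auto. Qed.

Lemma run_around (y : nat -> A) c i d :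
  occurs_at w y i ->
  (forall k, (c <= k < i)%nat -> y k = y (k + q)%nat) ->
  (forall k, (i + length w <= k < d)%nat -> y k = y (k - q)%nat) ->
  periodic_on y q c d.
Proof.
  intros Hocc Hl Hr k Hk1 Hk2.
  destruct (Nat.lt_ge_cases (k + q) (i + length w)).
  - destruct (Nat.lt_ge_cases k i); [apply Hl; lia|].
    apply (periodic_on_occurs Hper Hocc); lia.
  - rewrite (Hr (k + q)%nat) by lia. f_equal. lia.
Qed.

Lemma qpow_occurs_in_run (y : nat -> A) a b i c e R :
  periodic_on y q a b -> occurs_at w y i -> (a <= c)%nat -> (c + e * q = i)%nat ->
  (i + length w <= b)%nat -> (c + length (qpow w q R) <= b)%nat -> occurs_at (qpow w q R) y c.
Proof.
  intros Hrun Hocc Hac Hci Hib HcR k Hk.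
  apply qpow_in_run with (a := a) (b := b) (i := i) (d := e); auto; lia.
Qed.

Lemma run_exit (y : nat -> A) i :
  occurs_at w y i ->
  (exists k, (k < i)%nat /\ left_break y q k) ->
  (exists k, (i + length w <= k)%nat /\ right_break y q k) ->
  exists a b, (1 <= a <= i)%nat /\ (i + length w <= b)%nat /\ right_break y q b /\
    exit_shape w q (word_of y (a - 1) (b - a + 2)).
Proof.
  intros Hocc HL HR.
  destruct (@last_below _ _ HL) as [k0 [Hk0 [Hb0 Hlast]]].
  destruct (@first_above _ _ HR) as [b [Hb [Hbb Hfirst]]].
  exists (S k0), b. repeat split; auto; try lia.
  apply (exit_from_run Hper Hq H2q (i := i)); auto; try lia.
  - apply (run_around Hocc); intros k Hk; apply NNPP.
    + apply Hlast. lia.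
    + apply Hfirst. lia.
  - replace (S k0 - 1)%nat with k0 by lia. exact Hb0.
Qed.
End Runs.

Lemma iter_shift {A : Type} n (y : nat -> A) k : Nat.iter n (@shift A) y k = y (n + k)%nat.
Proof.
  revert k. induction n as [|n IH]; intros k; simpl; auto. unfold shift. rewrite IH. f_equal. lia.
Qed.

Lemma occurs_iter {A : Type} (u : list A) n y c :
  occurs_at u (Nat.iter n (@shift A) y) c <-> occurs_at u y (n + c).
Proof.
  unfold occurs_at. split; intros H k Hk; rewrite H, ?iter_shift by auto; do 2 f_equal; lia.
Qed.

Lemma lang_of_point {A : Type} (X : (nat -> A) -> Prop) u y c :
  X y -> occurs_at u y c -> u <> [] -> lang X u.
Proof. intros. split; auto. exists y, c. auto. Qed.

Section Subshift.
Variables (A : Type) (X : (nat -> A) -> Prop).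
Hypothesis HX : subshift X.

Lemma iter_shift_in n y : X y -> X (Nat.iter n (@shift A) y).
Proof. destruct HX as [_ [_ [Hs _]]]. intros Hy. induction n; simpl; auto. Qed.

(* Since [S X = X], every point has a [T]-th preimage. *)
Lemma shift_preimage T y : X y -> exists y', X y' /\ forall k, y' (T + k)%nat = y k.
Proof.
  intros Hy. induction T as [|T [y' [Hy' He]]].
  - exists y. auto.
  - destruct HX as [_ [_ [_ Hs]]]. destruct (Hs y' Hy') as [y'' [Hy'' <-]].
    exists y''. split; auto.
Qed.

Lemma lang_point_at u T : lang X u -> exists y, X y /\ occurs_at u y T.
Proof.
  intros [_ [x [i [Hx Ho]]]].
  destruct (shift_preimage T (iter_shift_in i Hx)) as [y [Hy He]].
  exists y. split; auto. intros k Hk. rewrite He, iter_shift. apply Ho, Hk.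
Qed.

Definition cyl (u : list A) (c : nat) : (nat -> A) -> Prop := fun y => X y /\ occurs_at u y c.

Lemma cyl_open u c : rel_open X (cyl u c).
Proof.
  split; [intros x [Hx _]; exact Hx|].
  intros x [Hx Ho]. exists (c + length u)%nat. intros y Hy Hag. split; auto.
  intros k Hk. rewrite Ho by auto. f_equal. apply Hag. lia.
Qed.

Lemma glue u v : transitive X -> lang X u -> lang X v ->
  exists y g, X y /\ occurs_at u y 0 /\ occurs_at v y (length u + g).
Proof.
  intros Htr Hu Hv.
  destruct (lang_point_at 0 Hu) as [yu Hyu]. destruct (lang_point_at (length u) Hv) as [yv Hyv].
  destruct (Htr (cyl u 0) (cyl v (length u)) (cyl_open u 0) (cyl_open v (length u))
              (ex_intro _ yu Hyu) (ex_intro _ yv Hyv)) as [g [y [[Hy Hou] [_ Hov]]]].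
  exists y, g. repeat split; auto. apply occurs_iter in Hov. rewrite Nat.add_comm. exact Hov.
Qed.
End Subshift.

Section LongRuns.
Variables (A : Type) (X : (nat -> A) -> Prop) (w : list A) (q : nat).
Hypotheses (HX : subshift X) (Hper : qperiodic w q) (Hq : (1 <= q)%nat)
  (H2q : (2 * q <= length w)%nat).

Lemma qpow_nonnil R : qpow w q R <> [].
Proof.
  intros E. apply (f_equal (@length A)) in E. rewrite length_qpow in E by lia. simpl in E. lia.
Qed.

Lemma occurs_qpow_w (y : nat -> A) c R : occurs_at (qpow w q R) y c -> occurs_at w y c.
Proof.
  intros Hocc k Hk.
  rewrite (nth_w_mod Hper), <- nth_qpow with (r := R)
    by (auto; rewrite ?length_qpow by lia; nia).
  apply Hocc. rewrite length_qpow by lia. nia.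
Qed.

Lemma left_break_near (y : nat -> A) i R :
  ~ lang X (qpow w q R) -> X y -> occurs_at w y i -> ((R - 1) * q <= i)%nat ->
  exists k, (k < i)%nat /\ left_break y q k.
Proof.
  intros HnP Hy Hocc Hi.
  destruct (classic (exists k, (i - (R - 1) * q <= k < i)%nat /\ left_break y q k))
    as [[k [Hk Hb]] | Hnone]; [exists k; split; [lia | exact Hb]|].
  assert (Hrun : periodic_on y q (i - (R - 1) * q) (i + length w)).
  { apply (run_around Hper Hq H2q Hocc); intros k Hk; [|lia].
    apply NNPP. intros Hb. apply Hnone. exists k. split; [lia | exact Hb]. }
  exfalso. apply HnP. apply (lang_of_point X Hy (c := (i - (R - 1) * q)%nat)); [|apply qpow_nonnil].
  apply qpow_occurs_in_run with (a := (i - (R - 1) * q)%nat) (b := (i + length w)%nat)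
    (i := i) (e := (R - 1)%nat); auto; try rewrite length_qpow; lia.
Qed.

Lemma right_break_near (y : nat -> A) i R :
  ~ lang X (qpow w q R) -> X y -> occurs_at w y i ->
  exists k, (i + length w <= k)%nat /\ right_break y q k.
Proof.
  intros HnP Hy Hocc.
  destruct (classic (exists k, (i + length w <= k < i + length w + (R - 1) * q)%nat /\
                               right_break y q k))
    as [[k [Hk Hb]] | Hnone]; [exists k; split; [lia | exact Hb]|].
  assert (Hrun : periodic_on y q i (i + length w + (R - 1) * q)).
  { apply (run_around Hper Hq H2q Hocc); intros k Hk; [lia|].
    apply NNPP. intros Hb. apply Hnone. exists k. split; [lia | exact Hb]. }
  exfalso. apply HnP. apply (lang_of_point X Hy (c := i)); [|apply qpow_nonnil].
  apply qpow_occurs_in_run with (a := i) (b := (i + length w + (R - 1) * q)%nat)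
    (i := i) (e := 0%nat); auto; try rewrite length_qpow; nia.
Qed.

Lemma exit_cover (x : nat -> A) i R :
  ~ lang X (qpow w q R) -> X x -> occurs_at w x i -> ((R - 1) * q <= i)%nat ->
  exists z j, exit_shape w q z /\ lang X z /\ occurs_at z x j /\ (j <= i)%nat /\
     (i + length w <= j + length z)%nat.
Proof.
  intros HnP Hx Hocc Hi.
  destruct (run_exit Hper Hq H2q Hocc (left_break_near R HnP Hx Hocc Hi)
              (right_break_near R HnP Hx Hocc)) as [a [b [Ha [Hb [_ Hexit]]]]].
  exists (word_of x (a - 1) (b - a + 2)), (a - 1)%nat. split; [exact Hexit|].
  split; [apply (lang_of_point X Hx (occurs_word_of x (a - 1) (b - a + 2))), word_of_nonnil; lia|].
  split; [apply occurs_word_of|]. rewrite length_word_of. lia.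
Qed.

(* In a transitive subshift, if all exit words of [w] in the language have length [<= R],
   then [w^{q*(R+1)}] is not in the language: otherwise gluing an exit word, this power
   and the exit word again produces a point whose run through the power yields a longer
   exit word. *)
Lemma no_long_power z0 R :
  transitive X -> exit_shape w q z0 -> lang X z0 ->
  (forall z, exit_shape w q z -> lang X z -> (length z <= R)%nat) ->
  ~ lang X (qpow w q (S R)).
Proof.
  intros Htr Hz0 Hz0l Hbound HP.
  assert (Hz0len : (1 <= length z0)%nat)
    by (destruct z0; [destruct Hz0l as [H _]; congruence | simpl; lia]).
  set (P := qpow w q (S R)) in *.
  assert (HwP : (length w <= length P)%nat) by (unfold P; rewrite length_qpow by lia; nia).
  destruct (glue HX Htr Hz0l HP) as [y0 [g0 [Hy0 [Hz0y0 HPy0]]]].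
  set (n0 := (length z0 + g0)%nat) in *. set (T := (n0 + length P)%nat).
  assert (Hpre : lang X (word_of y0 0 T))
    by (apply (lang_of_point X Hy0 (occurs_word_of y0 0 T)), word_of_nonnil; unfold T, n0; lia).
  destruct (glue HX Htr Hpre Hz0l) as [y1 [g1 [Hy1 [Hagree Hz0y1]]]].
  rewrite length_word_of in Hz0y1.
  assert (Hsame : forall k, (k < T)%nat -> y1 k = y0 k).
  { intros k Hk. assert (E := Hagree k). rewrite length_word_of, nth_word_of in E by lia.
    specialize (E Hk). injection E. auto. }
  (* The point [y1] shows [z0] at [0], the power [P] at [n0] and [z0] again after [P]. *)
  assert (Hz0y1' : occurs_at z0 y1 0).
  { intros k Hk. rewrite Hsame by (unfold T, n0 in *; lia). apply Hz0y0, Hk. }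
  assert (HPy1 : occurs_at P y1 n0).
  { intros k Hk. rewrite Hsame by (unfold T in *; lia). apply HPy0, Hk. }
  destruct (run_exit Hper Hq H2q (@occurs_qpow_w y1 n0 (S R) HPy1))
    as [a [b [Ha [Hb [Hbreak Hexit]]]]].
  { exists 0%nat. split; [unfold n0; lia|]. apply (exit_left_break Hper Hq H2q Hz0 Hz0y1'). }
  { exists (T + g1 + length z0 - 1)%nat. split; [unfold T, n0 in *; lia|].
    apply (exit_right_break Hper Hq H2q Hz0 Hz0y1). }
  (* The run through [P] ends after [P], so the exit word read off is longer than [P]. *)
  assert (HbP : (n0 + length P <= b)%nat).
  { destruct (Nat.lt_ge_cases b (n0 + length P)) as [Hlt|]; auto. exfalso. apply Hbreak.
    replace b with (b - q + q)%nat at 1 by lia. symmetry.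
    apply (periodic_on_occurs (qpow_qperiodic Hper Hq H2q (S R)) HPy1);
      fold P; unfold n0 in *; lia. }
  assert (Hzl : lang X (word_of y1 (a - 1) (b - a + 2)))
    by (apply (lang_of_point X Hy1 (occurs_word_of y1 (a - 1) (b - a + 2))), word_of_nonnil; lia).
  assert (Hle := Hbound _ Hexit Hzl). rewrite length_word_of in Hle.
  assert (HPl : (R <= length P)%nat) by (unfold P; rewrite length_qpow by lia; nia).
  lia.
Qed.
End LongRuns.

Fixpoint sum_below (f : nat -> nat) (N : nat) : nat :=
  match N with O => O | S N' => (sum_below f N' + f N')%nat end.

Fixpoint lsum {T : Type} (l : list T) (f : T -> nat) : nat :=
  match l with [] => O | a :: l' => (f a + lsum l' f)%nat end.

Lemma sum_below_le f g N :
  (forall k, (k < N)%nat -> (f k <= g k)%nat) -> (sum_below f N <= sum_below g N)%nat.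
Proof.
  induction N as [|N IH]; simpl; intros H; [lia|].
  specialize (IH (fun k Hk => H k ltac:(lia))). specialize (H N ltac:(lia)). lia.
Qed.

Lemma sum_below_add f g N :
  sum_below (fun k => f k + g k)%nat N = (sum_below f N + sum_below g N)%nat.
Proof. induction N as [|N IH]; simpl; [lia|]. rewrite IH. lia. Qed.

Lemma sum_below_scal c f N : sum_below (fun k => c * f k)%nat N = (c * sum_below f N)%nat.
Proof. induction N as [|N IH]; simpl; [lia|]. rewrite IH. lia. Qed.

Lemma sum_below_swap (F : nat -> nat -> nat) N M :
  sum_below (fun j => sum_below (F j) M) N = sum_below (fun u => sum_below (fun j => F j u) N) M.
Proof.
  induction N as [|N IH]; simpl.
  - induction M as [|M IHM]; simpl; [reflexivity | rewrite <- IHM; reflexivity].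
  - rewrite IH, <- sum_below_add. reflexivity.
Qed.

Lemma sum_below_term f N k : (k < N)%nat -> (f k <= sum_below f N)%nat.
Proof.
  induction N as [|N IH]; simpl; intros H; [lia|].
  destruct (Nat.eq_dec k N) as [->|]; [lia|]. specialize (IH ltac:(lia)). lia.
Qed.

Lemma sum_below_interval_lower g f H N :
  (forall u, (f <= u < f + H)%nat -> (1 <= g u)%nat) ->
  (Nat.min N (f + H) - Nat.min N f <= sum_below g N)%nat.
Proof.
  intros Hg. induction N as [|N IH]; cbn [sum_below]; [lia|].
  destruct (Nat.le_gt_cases f N); destruct (Nat.lt_ge_cases N (f + H));
    try (specialize (Hg N ltac:(lia))); lia.
Qed.

Lemma sum_below_interval_upper g f C N :
  (forall u, (u < N)%nat -> (g u <= 1)%nat /\ ((1 <= g u)%nat -> (f <= u < f + C)%nat)) ->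
  (sum_below g N <= C)%nat.
Proof.
  intros Hg. enough (sum_below g N <= Nat.min N (f + C) - Nat.min N f)%nat by lia.
  induction N as [|N IH]; cbn [sum_below]; [lia|].
  specialize (IH (fun u Hu => Hg u ltac:(lia))). destruct (Hg N ltac:(lia)) as [H1 H2].
  destruct (Nat.eq_dec (g N) 0); [lia|]. specialize (H2 ltac:(lia)). lia.
Qed.

Lemma lsum_le {T : Type} (l : list T) f g :
  (forall z, In z l -> (f z <= g z)%nat) -> (lsum l f <= lsum l g)%nat.
Proof.
  induction l as [|a l IH]; simpl; intros H; [lia|].
  specialize (IH (fun z Hz => H z (or_intror Hz))). specialize (H a (or_introl eq_refl)). lia.
Qed.

Lemma lsum_term {T : Type} (l : list T) f z : In z l -> (f z <= lsum l f)%nat.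
Proof.
  induction l as [|a l IH]; simpl; intros Hin; [contradiction|].
  destruct Hin as [->|Hin]; [lia|]. specialize (IH Hin). lia.
Qed.

Lemma lsum_sum_below_swap {T : Type} (l : list T) (F : T -> nat -> nat) M :
  sum_below (fun u => lsum l (fun z => F z u)) M = lsum l (fun z => sum_below (F z) M).
Proof.
  induction l as [|a l IH]; simpl.
  - induction M as [|M IHM]; simpl; [reflexivity | rewrite IHM; reflexivity].
  - rewrite sum_below_add, IH. reflexivity.
Qed.

Definition ind (P : Prop) : nat := if excluded_middle_informative P then 1%nat else 0%nat.

Lemma ind_le1 P : (ind P <= 1)%nat.
Proof. unfold ind. destruct excluded_middle_informative; lia. Qed.

Lemma ind_true P : P -> ind P = 1%nat.
Proof. unfold ind. destruct excluded_middle_informative; tauto. Qed.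

Lemma ind_pos P : (1 <= ind P)%nat -> P.
Proof. unfold ind. destruct excluded_middle_informative; [auto | lia]. Qed.

Definition rel_count (R : nat -> nat -> Prop) (N M : nat) : nat :=
  sum_below (fun j => sum_below (fun u => ind (R j u)) M) N.

Lemma rel_count_transpose R N M : rel_count R N M = rel_count (fun u j => R j u) M N.
Proof. unfold rel_count. apply sum_below_swap. Qed.

Lemma rel_count_rows_lower (a : nat -> nat) (R : nat -> nat -> Prop) N M H :
  (forall j, (j < N)%nat -> (a j <= 1)%nat) ->
  (forall j, (j < N)%nat -> a j = 1%nat ->
     exists f, (f + H <= M)%nat /\ forall u, (f <= u < f + H)%nat -> R j u) ->
  (H * sum_below a N <= rel_count R N M)%nat.
Proof.
  intros Ha Hrow. unfold rel_count. rewrite <- sum_below_scal. apply sum_below_le.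
  intros j Hj. specialize (Ha j Hj). destruct (Nat.eq_dec (a j) 1) as [E|E]; [|nia].
  destruct (Hrow j Hj E) as [f [HfM Hf]]. rewrite E, Nat.mul_1_r.
  assert (Hlow := @sum_below_interval_lower (fun u => ind (R j u)) f H M
                    (fun u Hu => Nat.eq_le_incl _ _ (eq_sym (ind_true (Hf u Hu))))).
  lia.
Qed.

Lemma rel_count_rows_upper (a : nat -> nat) (R : nat -> nat -> Prop) N M C :
  (forall j, (j < N)%nat -> (exists u, (u < M)%nat /\ R j u) -> a j = 1%nat) ->
  (forall j u u', (j < N)%nat -> (u < M)%nat -> (u' < M)%nat -> R j u -> R j u' ->
     (u' < u + C)%nat) ->
  (rel_count R N M <= C * sum_below a N)%nat.
Proof.
  intros Ha Hwin. unfold rel_count. rewrite <- sum_below_scal. apply sum_below_le.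
  intros j Hj.
  destruct (classic (exists u, (0 <= u)%nat /\ (u < M)%nat /\ R j u)) as [Hex|Hno].
  - destruct (@first_above (fun u => (u < M)%nat /\ R j u) 0 ltac:(firstorder))
      as [u0 [_ [[Hu0 HR0] Hmin]]].
    rewrite (Ha j Hj ltac:(exists u0; auto)), Nat.mul_1_r.
    apply (@sum_below_interval_upper _ u0). intros u Hu. split; [apply ind_le1|].
    intros Hind. apply ind_pos in Hind. split.
    + apply Nat.nlt_ge. intros Hlt. apply (Hmin u); [lia | auto].
    + apply (Hwin j u0 u); auto.
  - transitivity 0%nat; [|lia]. apply (@sum_below_interval_upper _ 0).
    intros u Hu. split; [apply ind_le1|]. intros Hi. apply ind_pos in Hi.
    exfalso. apply Hno. exists u. repeat split; auto; lia.
Qed.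

Lemma rel_count_cover {T : Type} (b : nat -> nat) (l : list T) (Rz : T -> nat -> nat -> Prop)
    (Nz : T -> nat) M u0 :
  (forall u, (u < M)%nat -> (b u <= 1)%nat) ->
  (forall u, (u < M)%nat -> b u = 1%nat ->
     (u < u0)%nat \/ exists z v, In z l /\ (v < Nz z)%nat /\ Rz z v u) ->
  (sum_below b M <= u0 + lsum l (fun z => rel_count (Rz z) (Nz z) M))%nat.
Proof.
  intros Hb Hcov.
  transitivity (sum_below (fun u => ind (u < u0)%nat +
                  lsum l (fun z => sum_below (fun v => ind (Rz z v u)) (Nz z)))%nat M).
  - apply sum_below_le. intros u Hu. specialize (Hb u Hu).
    destruct (Nat.eq_dec (b u) 1) as [E|E]; [|lia]. rewrite E.
    destruct (Hcov u Hu E) as [Hlt | [z [v [Hz [Hv HR]]]]].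
    + rewrite ind_true; lia.
    + assert (H1 := sum_below_term (fun v => ind (Rz z v u)) Hv). cbv beta in H1.
      rewrite ind_true in H1 by auto.
      assert (H2 := @lsum_term _ l (fun z => sum_below (fun v => ind (Rz z v u)) (Nz z)) z Hz).
      simpl in H2.
      lia.
  - rewrite sum_below_add, lsum_sum_below_swap. apply Nat.add_le_mono.
    + apply (@sum_below_interval_upper _ 0). intros u Hu. split; [apply ind_le1|].
      intros Hi. apply ind_pos in Hi. lia.
    + apply lsum_le. intros z _. unfold rel_count. rewrite <- sum_below_swap. lia.
Qed.

(* Blocks of width [L]: position [a] lies in block [a / L]. *)
Lemma div_add_bounds L a b : (1 <= L)%nat ->
  (a / L + b / L <= (a + b) / L <= a / L + b / L + 1)%nat.
Proof.
  intros HL.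
  pose proof (Nat.div_mod_eq a L). pose proof (Nat.div_mod_eq b L).
  pose proof (Nat.div_mod_eq (a + b) L).
  pose proof (Nat.mod_upper_bound a L ltac:(lia)). pose proof (Nat.mod_upper_bound b L ltac:(lia)).
  pose proof (Nat.mod_upper_bound (a + b) L ltac:(lia)).
  split; nia.
Qed.

Lemma div_eq L a u : (u * L <= a < (u + 1) * L)%nat -> a / L = u.
Proof. intros H. symmetry. apply (Nat.div_unique a L u (a - u * L)); nia. Qed.

Lemma div_bounds L a : (1 <= L)%nat -> (a / L * L <= a < (a / L + 1) * L)%nat.
Proof.
  intros HL. pose proof (Nat.div_mod_eq a L). pose proof (Nat.mod_upper_bound a L ltac:(lia)). nia.
Qed.

Lemma progression_hits_blocks L q s r u :
  (1 <= q <= L)%nat -> (1 <= r)%nat -> (s / L <= u <= (s + (r - 1) * q) / L)%nat ->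
  exists t, (t < r)%nat /\ (s + t * q) / L = u.
Proof.
  intros Hq Hr Hu.
  pose proof (div_bounds s (L := L) ltac:(lia)) as Hs.
  pose proof (div_bounds (s + (r - 1) * q) (L := L) ltac:(lia)) as He.
  destruct (Nat.eq_dec u (s / L)) as [->|Hne]; [exists 0%nat; split; [lia | f_equal; lia]|].
  set (t := ((u * L - s + q - 1) / q)%nat).
  pose proof (div_bounds (u * L - s + q - 1) (L := q) ltac:(lia)) as Ht. fold t in Ht.
  assert (Hlow : (u * L <= s + t * q < u * L + q)%nat) by nia.
  exists t. split.
  - assert (t * q < r * q)%nat by nia. nia.
  - apply div_eq. nia.
Qed.

(* The block indicator [r K v x (S j)]: does [v] occur in [x] at a position of the
   [j]-th block of width [(K+1)|v|]? *)
Lemma r_le1 {A : Type} K (v : list A) x j : (r K v x j <= 1)%nat.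
Proof. unfold r. destruct excluded_middle_informative; lia. Qed.

Lemma rsum_sum_below {A : Type} K (v : list A) x N :
  rsum K v x N = sum_below (fun j => r K v x (S j)) N.
Proof. induction N as [|N IH]; simpl; auto. Qed.

Lemma rsum_le {A : Type} K (v : list A) x N : (rsum K v x N <= N)%nat.
Proof. induction N as [|N IH]; simpl; [lia|]. pose proof (r_le1 K v x (S N)). lia. Qed.

Lemma r_hit {A : Type} K (v : list A) x i : (1 <= length v)%nat -> occurs_at v x i ->
  r K v x (S (i / ((K + 1) * length v))) = 1%nat.
Proof.
  intros Hv Ho. unfold r. destruct excluded_middle_informative as [_|Hn]; auto. exfalso. apply Hn.
  pose proof (div_bounds i (L := ((K + 1) * length v)%nat) ltac:(nia)).
  exists (S i). simpl. rewrite !Nat.sub_0_r. repeat split; auto; nia.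
Qed.

Lemma r_elim {A : Type} K (v : list A) x j : r K v x (S j) = 1%nat ->
  exists i, (j * ((K + 1) * length v) <= i < S j * ((K + 1) * length v))%nat /\ occurs_at v x i.
Proof.
  unfold r. destruct excluded_middle_informative as [[k [H1 [H2 H3]]]|_]; [|lia]. intros _.
  exists (k - 1)%nat. simpl in H1. rewrite Nat.sub_0_r in H1. split; auto. nia.
Qed.

(* Each occurrence of [z] carries [r] occurrences of [w],
   [q] apart, hence meets [H = 1 + (r-1)q/L_w] consecutive [w]-blocks; conversely a [w]-block
   is met in this way from at most two [z]-blocks. *)
Lemma count_w_from_z {A : Type} K (w z : list A) q x lp rr N :
  (1 <= q <= length w)%nat -> (1 <= rr)%nat ->
  (lp + (rr - 1) * q + length w + 1 <= length z)%nat ->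
  (forall c, occurs_at z x c -> forall t, (t < rr)%nat -> occurs_at w x (c + lp + t * q)) ->
  let Lw := ((K + 1) * length w)%nat in let Lz := ((K + 1) * length z)%nat in
  let H := (1 + (rr - 1) * q / Lw)%nat in
  (H * rsum K z x N <= 2 * rsum K w x ((N * Lz + length z) / Lw + H))%nat.
Proof.
  intros Hq Hr Hz Hocc Lw Lz H.
  assert (HLw : (q <= Lw)%nat) by (unfold Lw; lia).
  set (M := ((N * Lz + length z) / Lw + H)%nat).
  set (Rel := fun j u => exists i t, (j * Lz <= i < S j * Lz)%nat /\ occurs_at z x i /\
                                     (t < rr)%nat /\ ((i + lp + t * q) / Lw)%nat = u).
  rewrite !rsum_sum_below. transitivity (rel_count Rel N M).
  - apply rel_count_rows_lower; [intros; apply r_le1|].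
    intros j Hj Hhit. destruct (r_elim _ _ _ _ Hhit) as [i [Hi Hoi]]. fold Lz in Hi.
    exists ((i + lp) / Lw)%nat. split.
    + unfold M. enough ((i + lp) / Lw <= (N * Lz + length z) / Lw)%nat by lia.
      apply Nat.Div0.div_le_mono.
      assert (S j * Lz <= N * Lz)%nat by (apply Nat.mul_le_mono_r; lia). lia.
    + intros u Hu. pose proof (div_add_bounds (i + lp) ((rr - 1) * q) (L := Lw) ltac:(lia)).
      destruct (@progression_hits_blocks Lw q (i + lp) rr u) as [t [Ht Htu]]; try lia.
      exists i, t. repeat split; auto; lia.
  - rewrite rel_count_transpose. apply rel_count_rows_upper.
    + intros u _ [j [_ [i [t [_ [Hoi [Ht Hu]]]]]]]. rewrite <- Hu.
      apply r_hit; [lia | auto].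
    + intros u j j' _ _ _ [i [t [Hi [_ [Ht Hu]]]]] [i' [t' [Hi' [_ [Ht' Hu']]]]].
      pose proof (div_bounds (i + lp + t * q) (L := Lw) ltac:(lia)) as B.
      pose proof (div_bounds (i' + lp + t' * q) (L := Lw) ltac:(lia)) as B'.
      rewrite Hu, Nat.mul_add_distr_r in B. rewrite Hu', Nat.mul_add_distr_r in B'.
      assert (t * q <= (rr - 1) * q)%nat by (apply Nat.mul_le_mono_r; lia).
      assert (Lw + (rr - 1) * q <= Lz)%nat.
      { assert (Hmono : ((K + 1) * (length w + (rr - 1) * q) <= (K + 1) * length z)%nat)
          by (apply Nat.mul_le_mono_l; lia).
        unfold Lw, Lz. rewrite Nat.mul_add_distr_l in Hmono. nia. }
      assert (Hii : (i' < i + Lz)%nat) by lia.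
      apply Nat.nle_gt. intros Hjj.
      assert ((j + 2) * Lz <= j' * Lz)%nat by (apply Nat.mul_le_mono_r; lia).
      rewrite Nat.mul_add_distr_r in *. simpl in Hi. lia.
Qed.

(* Constants of the second inequality: an occurrence of an exit word [z] in the [v]-th
   [z]-block covers [w]-blocks in a window of [exit_window] consecutive blocks, and the
   [w]-blocks below [M] are covered from the first [exit_blocks] [z]-blocks. *)
Definition exit_window {A : Type} K (w z : list A) : nat :=
  (((K + 1) * length z + length z - length w - 1) / ((K + 1) * length w) + 2)%nat.

Definition exit_blocks {A : Type} K (w z : list A) (M : nat) : nat :=
  (M * ((K + 1) * length w) / ((K + 1) * length z) + 1)%nat.

Definition covers_block {A : Type} K (w z : list A) (x : nat -> A) (v u : nat) : Prop :=
  exists j i, (v * ((K + 1) * length z) <= j < S v * ((K + 1) * length z))%nat /\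
    occurs_at z x j /\ occurs_at w x i /\ (j <= i)%nat /\ (i + length w <= j + length z)%nat /\
    (i / ((K + 1) * length w))%nat = u.

Lemma covers_block_hit {A : Type} K (w z : list A) x v u :
  (1 <= length z)%nat -> covers_block K w z x v u -> r K z x (S v) = 1%nat.
Proof.
  intros Hz [j [i [Hj [Hoj _]]]].
  replace v with (j / ((K + 1) * length z))%nat by (apply div_eq; lia). apply r_hit; auto.
Qed.

Lemma covers_block_window {A : Type} K (w z : list A) x v u u' :
  (1 <= length w <= length z)%nat -> covers_block K w z x v u -> covers_block K w z x v u' ->
  (u' < u + exit_window K w z)%nat.
Proof.
  intros Hl [j [i [Hj [_ [_ [Hji [_ Hiu]]]]]]] [j' [i' [Hj' [_ [_ [Hji' [Hij' Hiu']]]]]]].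
  subst u u'. set (Lw := ((K + 1) * length w)%nat) in *. set (Lz := ((K + 1) * length z)%nat) in *.
  assert (HLw : (1 <= Lw)%nat) by (unfold Lw; lia).
  set (B := (Lz + length z - length w - 1)%nat).
  assert (Hii : (i' <= i + B)%nat) by (unfold B; simpl in Hj'; lia).
  pose proof (div_add_bounds i B HLw).
  assert (i' / Lw <= (i + B) / Lw)%nat by (apply Nat.Div0.div_le_mono; lia).
  unfold exit_window. fold Lw Lz B. lia.
Qed.

(* Counting for the second inequality: when long powers of [w] are forbidden, all blocks
   hit by [w] except the first few are covered by occurrences of exit words. *)
Lemma count_w_by_exits {A : Type} (X : (nat -> A) -> Prop) K (w : list A) q R x
    (l : list (list A)) M :
  qperiodic w q -> (1 <= q)%nat -> (2 * q <= length w)%nat ->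
  ~ lang X (qpow w q (S R)) -> X x ->
  (forall z, exit_shape w q z -> lang X z -> In z l) ->
  (forall z, In z l -> (length w <= length z)%nat) ->
  (rsum K w x M <=
     R * q + lsum l (fun z => exit_window K w z * rsum K z x (exit_blocks K w z M)))%nat.
Proof.
  intros Hper Hq H2q HnP Hx Hl Hlen.
  set (Lw := ((K + 1) * length w)%nat). assert (HLw : (1 <= Lw)%nat) by (unfold Lw; lia).
  rewrite rsum_sum_below.
  transitivity (R * q + lsum l (fun z =>
                  rel_count (covers_block K w z x) (exit_blocks K w z M) M))%nat.
  - apply rel_count_cover; [intros; apply r_le1|].
    intros u Hu Hhit. destruct (Nat.lt_ge_cases u (R * q)) as [|HuR]; [left; auto|right].
    destruct (r_elim _ _ _ _ Hhit) as [i [Hi Hoi]]. fold Lw in Hi.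
    assert (HRi : ((S R - 1) * q <= i)%nat).
    { assert (u * Lw <= i)%nat by lia. assert (u <= u * Lw)%nat by nia. lia. }
    destruct (exit_cover Hper Hq H2q (S R) HnP Hx Hoi HRi) as [z [j [Hz [Hzl [Hoz [Hji Hij]]]]]].
    assert (Hin := Hl z Hz Hzl). assert (Hlz := Hlen z Hin).
    set (Lz := ((K + 1) * length z)%nat). assert (HLz : (1 <= Lz)%nat) by (unfold Lz; lia).
    exists z, (j / Lz)%nat. split; [exact Hin|]. split.
    + unfold exit_blocks. fold Lw Lz.
      enough (j / Lz <= M * Lw / Lz)%nat by lia. apply Nat.Div0.div_le_mono.
      assert (S u * Lw <= M * Lw)%nat by (apply Nat.mul_le_mono_r; lia). lia.
    + pose proof (div_bounds j HLz). exists j, i. repeat split; auto; try lia. apply div_eq. lia.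
  - apply Nat.add_le_mono_l, lsum_le. intros z Hin. assert (Hlz := Hlen z Hin).
    rewrite rsum_sum_below. apply rel_count_rows_upper.
    + intros v _ [u [_ Hcov]]. eapply covers_block_hit; [|exact Hcov]. lia.
    + intros v u u' _ _ _ Hcov Hcov'. eapply covers_block_window; [|exact Hcov|exact Hcov']. lia.
Qed.

Open Scope R_scope.

Definition freq (f : nat -> nat) (N : nat) : R := INR (f N) / INR N.
Definition density (f : nat -> nat) : R := limsup (freq f).

Lemma Dens_density {A : Type} K (v : list A) x : Dens K v x = density (rsum K v x).
Proof. reflexivity. Qed.

Lemma freq_bounds f N : (f N <= N)%nat -> 0 <= freq f N <= 1.
Proof.
  intros Hf. unfold freq. destruct N as [|N].
  - simpl. unfold Rdiv. rewrite Rinv_0, Rmult_0_r. lra.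
  - assert (0 < INR (S N)) by (apply lt_0_INR; lia). apply le_INR in Hf.
    assert (0 <= INR (f (S N))) by apply pos_INR.
    split; [apply Rmult_le_pos; [lra | left; apply Rinv_0_lt_compat; lra]|].
    apply Rmult_le_reg_r with (INR (S N)); [lra|]. unfold Rdiv.
    rewrite Rmult_assoc, Rinv_l by lra. lra.
Qed.

Lemma limsup_exists (u : nat -> R) : (forall n, 0 <= u n <= 1) -> exists l, is_limsup u l.
Proof.
  intros Hb. destruct (Lim_seq.ex_LimSup_seq u) as [l Hl].
  destruct l as [l| |]; simpl in Hl.
  - exists l. split; intros eps He; destruct (Hl (mkposreal eps He)) as [H1 H2]; auto.
  - exfalso. destruct (Hl 2 0%nat) as [n [_ Hn]]. specialize (Hb n). lra.
  - exfalso. destruct (Hl (-1)) as [N HN]. specialize (HN N (le_n N)). specialize (Hb N). lra.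
Qed.

Lemma limsup_bounds (u : nat -> R) l : (forall n, 0 <= u n <= 1) -> is_limsup u l -> 0 <= l <= 1.
Proof.
  intros Hb [H1 H2]. split.
  - destruct (Rle_lt_dec 0 l); auto. destruct (H1 (- l / 2) ltac:(lra)) as [N HN].
    specialize (HN N (le_n N)). specialize (Hb N). lra.
  - destruct (Rle_lt_dec l 1); auto. destruct (H2 ((l - 1) / 2) ltac:(lra) 0%nat) as [n [_ Hn]].
    specialize (Hb n). lra.
Qed.

Lemma density_spec f : (forall N, f N <= N)%nat ->
  is_limsup (freq f) (density f) /\ 0 <= density f <= 1.
Proof.
  intros Hf. assert (Hb : forall N, 0 <= freq f N <= 1) by (intros; apply freq_bounds, Hf).
  assert (Hl : is_limsup (freq f) (density f))
    by (unfold density, limsup; apply epsilon_spec, limsup_exists, Hb).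
  split; [exact Hl | exact (limsup_bounds Hb Hl)].
Qed.

Lemma freq_count f N : (1 <= N)%nat -> freq f N * INR N = INR (f N).
Proof. intros H. unfold freq. field. apply not_0_INR. lia. Qed.

Lemma count_eventually_below f eps : (forall N, f N <= N)%nat -> 0 < eps ->
  exists N0, forall N, (N0 <= N)%nat -> INR (f N) <= (density f + eps) * INR N.
Proof.
  intros Hf He. destruct (proj1 (proj1 (density_spec f Hf)) eps He) as [N0 HN0].
  exists N0. intros N HN. destruct N as [|N].
  - specialize (Hf 0%nat). replace (f 0%nat) with 0%nat by lia. simpl. lra.
  - rewrite <- (freq_count f (N := S N)) by lia. specialize (HN0 (S N) HN).
    assert (0 < INR (S N)) by (apply lt_0_INR; lia). nra.
Qed.

Lemma count_often_above f eps N0 : (forall N, f N <= N)%nat -> 0 < eps ->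
  exists N, (N0 <= N)%nat /\ (1 <= N)%nat /\ (density f - eps) * INR N < INR (f N).
Proof.
  intros Hf He. destruct (proj2 (proj1 (density_spec f Hf)) eps He (Nat.max N0 1)) as [N [HN HfN]].
  exists N. repeat split; try lia. rewrite <- freq_count by lia.
  assert (1 <= INR N) by (apply (le_INR 1); lia). nra.
Qed.

Lemma le_of_eps a b c : 0 <= c -> (forall eps, 0 < eps <= 1 -> b - eps * c <= a) -> b <= a.
Proof.
  intros Hc H. destruct (Rle_dec b a) as [|Hn]; auto. exfalso.
  set (e := Rmin 1 ((b - a) / (2 * (c + 1)))).
  assert (He1 : 0 < e) by (apply Rmin_pos; [lra | apply Rdiv_lt_0_compat; lra]).
  assert (He2 : e <= 1) by apply Rmin_l.
  assert (He3 : e <= (b - a) / (2 * (c + 1))) by apply Rmin_r.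
  specialize (H e (conj He1 He2)).
  assert (e * (2 * (c + 1)) <= b - a).
  { apply Rmult_le_reg_r with (/ (2 * (c + 1))); [apply Rinv_0_lt_compat; lra|].
    rewrite Rmult_assoc, Rinv_r by lra. lra. }
  nra.
Qed.

Lemma large_nat (B eps : R) : 0 < eps -> exists N, forall n, (N <= n)%nat -> B <= eps * INR n.
Proof.
  intros He. destruct (INR_unbounded (B / eps)) as [N HN]. exists N. intros n Hn.
  assert (INR N <= INR n) by (apply le_INR; lia).
  apply Rmult_le_reg_r with (/ eps); [apply Rinv_0_lt_compat; lra|].
  rewrite (Rmult_comm eps), Rmult_assoc, Rinv_r by lra. unfold Rdiv in HN. lra.
Qed.

(* The real-number step of the transfer below: from [h (Df - eps) N <= h f_N <= c g_M],
   [g_M <= (Dg + eps) M] and [M a <= N b (1 + eps)], divide by [c b N]. *)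
Lemma transfer_step (h a c b N M Df Dg eps fN gM : R) :
  0 <= h -> 1 <= a -> 1 <= b -> 1 <= c -> 1 <= N -> 0 <= Dg -> 0 < eps ->
  (Df - eps) * N <= fN -> gM <= (Dg + eps) * M -> h * fN <= c * gM ->
  M * a <= N * b * (1 + eps) ->
  h * a / (c * b) * (Df - eps) <= (Dg + eps) * (1 + eps).
Proof.
  intros Hh Ha Hb Hc HN HDg He HfN HgM Hcnt HMa.
  assert (X1 : h * a * ((Df - eps) * N) <= c * b * ((Dg + eps) * (1 + eps) * N)).
  { assert (B1 : h * ((Df - eps) * N) * a <= c * ((Dg + eps) * M) * a).
    { apply Rmult_le_compat_r; [lra|].
      assert (h * ((Df - eps) * N) <= h * fN) by (apply Rmult_le_compat_l; lra).
      assert (c * gM <= c * ((Dg + eps) * M)) by (apply Rmult_le_compat_l; lra). lra. }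
    assert (B2 : c * (Dg + eps) * (M * a) <= c * (Dg + eps) * (N * b * (1 + eps)))
      by (apply Rmult_le_compat_l; [nra | exact HMa]).
    nra. }
  assert (Hpos : 0 < c * b * N) by (apply Rmult_lt_0_compat; [apply Rmult_lt_0_compat|]; lra).
  apply Rmult_le_reg_r with (c * b * N); [exact Hpos|].
  unfold Rdiv. replace (h * a * / (c * b) * (Df - eps) * (c * b * N))
    with (h * a * ((Df - eps) * N)) by (field; lra). lra.
Qed.

Lemma density_transfer (f g Mf : nat -> nat) (h c a b C : nat) :
  (forall N, f N <= N)%nat -> (forall N, g N <= N)%nat ->
  (1 <= a)%nat -> (1 <= b)%nat -> (1 <= c)%nat ->
  (forall N, h * f N <= c * g (Mf N))%nat ->
  (forall N, Mf N * a <= N * b + C)%nat -> (forall N, N <= Mf N)%nat ->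
  INR h * INR a / (INR c * INR b) * density f <= density g.
Proof.
  intros Hf Hg Ha Hb Hc Hcount HMa HMN.
  destruct (density_spec f Hf) as [_ [Df0 _]]. destruct (density_spec g Hg) as [_ [Dg0 Dg1]].
  assert (Ra : 1 <= INR a) by (apply (le_INR 1); auto).
  assert (Rb : 1 <= INR b) by (apply (le_INR 1); auto).
  assert (Rc : 1 <= INR c) by (apply (le_INR 1); auto).
  set (k := INR h * INR a / (INR c * INR b)).
  assert (Hk : 0 <= k) by (unfold k; apply Rmult_le_pos; [apply Rmult_le_pos; apply pos_INR|];
    left; apply Rinv_0_lt_compat; nra).
  apply (le_of_eps (c := k + 3)); [lra|]. intros eps [He1 He2].
  (* Pick [N] with [f N] large, beyond the thresholds where [g] is small and [C] negligible. *)
  destruct (count_eventually_below g Hg He1) as [N0 HN0].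
  destruct (@large_nat (INR C) (eps * INR b) ltac:(nra)) as [N1 HN1].
  destruct (count_often_above f (Nat.max N0 N1) Hf He1) as [N [HN [HN1' HfN]]].
  specialize (HN0 (Mf N) ltac:(specialize (HMN N); lia)). specialize (HN1 N ltac:(lia)).
  assert (HMr : INR (Mf N) * INR a <= INR N * INR b * (1 + eps)).
  { assert (INR (Mf N) * INR a <= INR N * INR b + INR C)
      by (rewrite <- !mult_INR, <- plus_INR; apply le_INR, HMa).
    nra. }
  assert (Hstep : k * (density f - eps) <= (density g + eps) * (1 + eps)).
  { apply transfer_step with (N := INR N) (M := INR (Mf N)) (fN := INR (f N))
      (gM := INR (g (Mf N))); auto; try apply pos_INR; try (apply (le_INR 1); lia).
    - lra.
    - rewrite <- !mult_INR. apply le_INR, Hcount. }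
  nra.
Qed.

Lemma eventually_forall_in {T : Type} (l : list T) (P : T -> nat -> Prop) :
  (forall z, In z l -> exists M0, forall M, (M0 <= M)%nat -> P z M) ->
  exists M0, forall M, (M0 <= M)%nat -> forall z, In z l -> P z M.
Proof.
  induction l as [|a l IH]; intros H; [exists 0%nat; intros M _ z []|].
  destruct (H a (or_introl eq_refl)) as [Ma Ha].
  destruct IH as [Ml Hl]; [intros z Hz; apply H; right; exact Hz|].
  exists (Nat.max Ma Ml). intros M HM z [<-|Hz]; [apply Ha | apply Hl]; auto; lia.
Qed.

Lemma lsum_INR_bound {T : Type} (l : list T) f B : (forall z, In z l -> INR (f z) <= B) ->
  INR (lsum l f) <= INR (length l) * B.
Proof.
  induction l as [|a l IH]; intros H; cbn [lsum length]; [simpl; lra|].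
  rewrite plus_INR, S_INR. specialize (IH (fun z Hz => H z (or_intror Hz))).
  specialize (H a (or_introl eq_refl)). lra.
Qed.

Lemma weighted_count_below (f Nf : nat -> nat) (Cw c Ctot : nat) (Dmax eps : R) :
  (forall N, f N <= N)%nat -> 0 < eps -> density f <= Dmax -> (Cw <= Ctot)%nat ->
  (forall M, Cw * Nf M <= c * M + Cw)%nat ->
  (forall N0, exists M0, forall M, (M0 <= M)%nat -> (N0 <= Nf M)%nat) ->
  exists M0, forall M, (M0 <= M)%nat ->
    INR (Cw * f (Nf M)) <= (Dmax + eps) * (INR c * INR M + INR Ctot).
Proof.
  intros Hf He HD HCt HCN HNinf.
  destruct (count_eventually_below f Hf He) as [N0 HN0].
  destruct (HNinf N0) as [M0 HM0]. exists M0. intros M HM.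
  specialize (HN0 (Nf M) (HM0 M HM)).
  assert (HC1 : INR Cw * INR (Nf M) <= INR c * INR M + INR Cw)
    by (rewrite <- !mult_INR, <- plus_INR; apply le_INR, HCN).
  assert (HC2 : INR Cw <= INR Ctot) by (apply le_INR, HCt).
  assert (0 <= INR Cw) by apply pos_INR. assert (0 <= INR (Nf M)) by apply pos_INR.
  destruct (density_spec f Hf) as [_ [Df0 _]].
  rewrite mult_INR.
  assert (INR Cw * INR (f (Nf M)) <= (Dmax + eps) * (INR Cw * INR (Nf M))).
  { apply Rle_trans with (INR Cw * ((density f + eps) * INR (Nf M)));
      [apply Rmult_le_compat_l; lra|].
    replace (INR Cw * ((density f + eps) * INR (Nf M)))
      with ((density f + eps) * (INR Cw * INR (Nf M))) by ring.
    apply Rmult_le_compat_r; [apply Rmult_le_pos|]; lra. }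
  assert ((Dmax + eps) * (INR Cw * INR (Nf M)) <= (Dmax + eps) * (INR c * INR M + INR Ctot))
    by (apply Rmult_le_compat_l; lra).
  lra.
Qed.

Lemma density_cover {T : Type} (g : nat -> nat) (l : list T) (fz : T -> nat -> nat)
    (Cf : T -> nat) (Nf : T -> nat -> nat) (u0 c : nat) (Dmax : R) :
  (forall N, g N <= N)%nat -> (forall z N, fz z N <= N)%nat ->
  (forall M, g M <= u0 + lsum l (fun z => Cf z * fz z (Nf z M)))%nat ->
  (forall z M, In z l -> Cf z * Nf z M <= c * M + Cf z)%nat ->
  (forall z N0, In z l -> exists M0, forall M, (M0 <= M)%nat -> (N0 <= Nf z M)%nat) ->
  (forall z, In z l -> density (fz z) <= Dmax) -> 0 <= Dmax ->
  density g <= INR c * INR (length l) * Dmax.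
Proof.
  intros Hg Hfz Hcount HCN HNinf HD HDm.
  set (nl := INR (length l)). assert (Hnl : 0 <= nl) by apply pos_INR.
  set (Ctot := lsum l Cf). assert (HCt : 0 <= INR Ctot) by apply pos_INR.
  assert (Rc : 0 <= INR c) by apply pos_INR.
  apply (le_of_eps (c := 2 + INR c * nl)); [nra|]. intros eps [He1 He2].
  destruct (@eventually_forall_in _ l (fun z M =>
      INR (Cf z * fz z (Nf z M)) <= (Dmax + eps) * (INR c * INR M + INR Ctot))) as [M0 HM0].
  { intros z Hz. apply weighted_count_below;
      [apply Hfz | exact He1 | apply HD, Hz | apply lsum_term, Hz
      | intros M; apply HCN, Hz | intros N0; apply HNinf, Hz]. }
  (* Pick [M] with [g M] large, beyond the thresholds above and where [u0] is negligible. *)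
  destruct (@large_nat (INR u0 + nl * (Dmax + 1) * INR Ctot) eps He1) as [M1 HM1].
  destruct (count_often_above g (Nat.max M0 M1) Hg He1) as [M [HM [HM1' HgM]]].
  specialize (HM1 M ltac:(lia)).
  assert (Hsum : INR (lsum l (fun z => Cf z * fz z (Nf z M))%nat)
                 <= nl * ((Dmax + eps) * (INR c * INR M + INR Ctot)))
    by (apply lsum_INR_bound; intros z Hz; apply HM0; auto; lia).
  assert (Hc : INR (g M) <= INR u0 + nl * ((Dmax + eps) * (INR c * INR M + INR Ctot))).
  { apply Rle_trans with (INR (u0 + lsum l (fun z => Cf z * fz z (Nf z M)))%nat);
      [apply le_INR, Hcount | rewrite plus_INR; lra]. }
  destruct (density_spec g Hg) as [_ [Dg0 _]].
  assert (RM : 1 <= INR M) by (apply (le_INR 1); lia).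
  assert (X1 : nl * (Dmax + eps) * INR Ctot <= nl * (Dmax + 1) * INR Ctot).
  { apply Rmult_le_compat_r; [lra|]. apply Rmult_le_compat_l; lra. }
  nra.
Qed.

(* Arithmetic behind the constant [3K + 9]: an exit word is not much longer than the
   [H = 1 + (r-1)q/L_w] blocks of [w] it meets. *)
Lemma exit_length_bound K n q rr lp ls :
  (1 <= q)%nat -> (2 * q <= n)%nat -> (lp <= q)%nat -> (ls <= q)%nat ->
  let Lw := ((K + 1) * n)%nat in
  (2 * ((K + 1) * (lp + ((rr - 1) * q + n) + ls))
     <= (1 + (rr - 1) * q / Lw) * Lw * (3 * K + 9))%nat.
Proof.
  intros Hq Hn Hlp Hls Lw.
  assert (HLw : (1 <= Lw)%nat) by (unfold Lw; lia).
  pose proof (div_bounds ((rr - 1) * q) HLw) as Hd.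
  set (d := ((rr - 1) * q / Lw)%nat) in *.
  assert (Hm : (lp + ((rr - 1) * q + n) + ls <= (1 + d) * n * (K + 3))%nat)
    by (unfold Lw in Hd; nia).
  unfold Lw. nia.
Qed.

Theorem density_w_ge_exit {A : Type} K (w z : list A) q x :
  qperiodic w q -> (1 <= q)%nat -> (2 * q <= length w)%nat -> exit_shape w q z ->
  / INR (3 * K + 9) * Dens K z x <= Dens K w x.
Proof.
  intros Hper Hq H2q Hz.
  destruct (exit_decomp Hper Hq H2q Hz) as [lp [ls [rr [Hr [Hlp [Hls [Hlen Hocc]]]]]]].
  set (n := length w) in *. set (m := length z) in *.
  set (Lw := ((K + 1) * n)%nat). set (Lz := ((K + 1) * m)%nat).
  set (H := (1 + (rr - 1) * q / Lw)%nat).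
  assert (HLw : (1 <= Lw)%nat) by (unfold Lw, n; lia).
  assert (HLz : (Lw <= Lz)%nat) by (unfold Lw, Lz; nia).
  set (Mf := fun N => ((N * Lz + m) / Lw + H)%nat).
  assert (Htransfer : INR H * INR Lw / (INR 2 * INR Lz) * Dens K z x <= Dens K w x).
  { rewrite !Dens_density.
    apply (@density_transfer (rsum K z x) (rsum K w x) Mf H 2 Lw Lz (m + H * Lw)%nat);
      try (intros; apply rsum_le); try lia.
    - intros N. apply (@count_w_from_z A K w z q x lp rr N); auto; lia.
    - intros N. unfold Mf. pose proof (div_bounds (N * Lz + m) HLw). nia.
    - intros N. unfold Mf. enough (N <= (N * Lz + m) / Lw)%nat by lia.
      apply Nat.div_le_lower_bound; nia. }
  assert (Hconst : (2 * Lz <= H * Lw * (3 * K + 9))%nat)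
    by (unfold Lz; rewrite Hlen; apply exit_length_bound; lia).
  destruct (density_spec (rsum K z x) (rsum_le K z x)) as [_ [Dz0 _]].
  rewrite <- Dens_density in Dz0.
  assert (Hk : / INR (3 * K + 9) <= INR H * INR Lw / (INR 2 * INR Lz)).
  { assert (R1 : 0 < INR (3 * K + 9)) by (apply lt_0_INR; lia).
    assert (R2 : 1 <= INR Lz) by (apply (le_INR 1); lia).
    assert (R0 : 0 < INR 2) by (simpl; lra).
    apply Rmult_le_reg_r with (INR 2 * INR Lz * INR (3 * K + 9));
      [apply Rmult_lt_0_compat; [apply Rmult_lt_0_compat|]; lra|].
    replace (/ INR (3 * K + 9) * (INR 2 * INR Lz * INR (3 * K + 9))) with (INR (2 * Lz))
      by (rewrite mult_INR; field; lra).
    replace (INR H * INR Lw / (INR 2 * INR Lz) * (INR 2 * INR Lz * INR (3 * K + 9)))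
      with (INR (H * Lw * (3 * K + 9))) by (rewrite !mult_INR; field; simpl; lra).
    apply le_INR, Hconst. }
  apply Rle_trans with (INR H * INR Lw / (INR 2 * INR Lz) * Dens K z x); [|exact Htransfer].
  apply Rmult_le_compat_r; assumption.
Qed.

Lemma exit_window_blocks {A : Type} K (w z : list A) M :
  (1 <= length w <= length z)%nat ->
  (exit_window K w z * exit_blocks K w z M <= 3 * M + exit_window K w z)%nat.
Proof.
  intros Hl. unfold exit_blocks. set (W := exit_window K w z).
  set (Lw := ((K + 1) * length w)%nat). set (Lz := ((K + 1) * length z)%nat).
  assert (HLw : (1 <= Lw)%nat) by (unfold Lw; lia).
  assert (HLz : (1 <= Lz)%nat) by (unfold Lz; lia).
  assert (HW : (W * Lw <= 3 * Lz)%nat).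
  { unfold W, exit_window. fold Lw Lz.
    pose proof (div_bounds (Lz + length z - length w - 1) HLw).
    assert (Lz + length z - length w - 1 + 2 * Lw <= 3 * Lz)%nat by (unfold Lw, Lz; nia). nia. }
  pose proof (div_bounds (M * Lw) HLz) as Hd. set (d := (M * Lw / Lz)%nat) in *.
  assert (Hdz : (W * d * Lz <= 3 * M * Lz)%nat) by nia.
  assert (W * d <= 3 * M)%nat.
  { destruct (Nat.le_gt_cases (W * d) (3 * M)) as [|Hgt]; auto.
    assert ((3 * M + 1) * Lz <= W * d * Lz)%nat by (apply Nat.mul_le_mono_r; lia). nia. }
  nia.
Qed.

Lemma exit_blocks_unbounded {A : Type} K (w z : list A) N0 :
  (1 <= length w <= length z)%nat ->
  exists M0, forall M, (M0 <= M)%nat -> (N0 <= exit_blocks K w z M)%nat.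
Proof.
  intros Hl. exists (N0 * ((K + 1) * length z))%nat. intros M HM. unfold exit_blocks.
  enough (N0 <= M * ((K + 1) * length w) / ((K + 1) * length z))%nat by lia.
  apply Nat.div_le_lower_bound; nia.
Qed.

Lemma argmax_list {T : Type} (l : list T) (f : T -> R) :
  l <> [] -> exists z', In z' l /\ forall z, In z l -> (f z <= f z')%R.
Proof.
  induction l as [|a l IH]; intros Hne; [congruence|].
  destruct l as [|b l'].
  - exists a. split; [left; auto|]. intros z [<-|[]]. lra.
  - destruct IH as [z' [Hz' Hmax]]; [discriminate|].
    destruct (Rle_lt_dec (f a) (f z')).
    + exists z'. split; [right; auto|]. intros z [<-|Hz]; auto.
    + exists a. split; [left; auto|]. intros z [<-|Hz]; [lra|]. specialize (Hmax z Hz). lra.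
Qed.

Theorem density_exit_ge_w {A : Type} (X : (nat -> A) -> Prop) K (w : list A) q x
    (l : list (list A)) :
  subshift X -> transitive X -> qperiodic w q -> (1 <= q)%nat -> (2 * q <= length w)%nat ->
  (forall z, In z l <-> exit_shape w q z /\ lang X z) -> l <> [] -> X x ->
  exists z', In z' l /\ (Dens K w x <= 3 * INR (length l) * Dens K z' x)%R.
Proof.
  intros HX Htr Hper Hq H2q Hl Hne Hx.
  destruct l as [|z0 l0] eqn:El; [congruence|]. rewrite <- El in *.
  destruct (proj1 (Hl z0) ltac:(rewrite El; left; reflexivity)) as [Hz0 Hz0l].
  set (Rl := lsum l (@length A)).
  assert (HnoP : ~ lang X (qpow w q (S Rl))).
  { apply (no_long_power HX Hper Hq H2q Htr Hz0 Hz0l). intros z Hs Hlz.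
    apply lsum_term, Hl. auto. }
  assert (Hlen : forall z, In z l -> (1 <= length w <= length z)%nat).
  { intros z Hz. apply Hl in Hz as [Hs _].
    destruct (exit_decomp Hper Hq H2q Hs) as [lp [ls [rr [_ [_ [_ [Hle _]]]]]]]. nia. }
  destruct (argmax_list (fun z => Dens K z x) Hne) as [z' [Hz' Hmax]].
  exists z'. split; [exact Hz'|].
  rewrite !Dens_density. replace 3%R with (INR 3) by (simpl; lra).
  apply (@density_cover _ (rsum K w x) l (fun z => rsum K z x) (exit_window K w) (exit_blocks K w)
           (Rl * q) 3); try (intros; apply rsum_le).
  - intros M. apply (count_w_by_exits K Rl x l M Hper Hq H2q HnoP Hx).
    + intros z Hs Hlz. apply Hl. auto.
    + intros z Hz. apply Hlen, Hz.
  - intros z M Hz. apply exit_window_blocks, Hlen, Hz.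
  - intros z N0 Hz. apply exit_blocks_unbounded, Hlen, Hz.
  - intros z Hz. rewrite <- !Dens_density. apply Hmax, Hz.
  - destruct (density_spec (rsum K z' x) (rsum_le K z' x)) as [_ [D0 _]]. exact D0.
Qed.

Lemma shrink_factor (Dw Dz a b : R) :
  Dw <= a * Dz -> 0 <= Dz -> 0 < a -> a <= b -> / b * Dw <= Dz.
Proof.
  intros Hle HDz Ha Hab. apply Rmult_le_reg_l with b; [lra|].
  rewrite <- Rmult_assoc, Rinv_r, Rmult_1_l by lra. nra.
Qed.

Unset Implicit Arguments.

(* The theorem: the first inequality is [density_w_ge_exit]; the second follows from
   [density_exit_ge_w], whose factor [3|X|] is at most [(2K+3)|X|]. *)
Theorem mainTheorem18 (A : Type) (enumA : list A) (HA : forall a : A, In a enumA)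
  (X : (nat -> A) -> Prop) (K : nat) (w : list A) (q : nat) :
  subshift X -> transitive X -> aperiodic X -> RBC X -> growth_constant X K ->
  lang X w -> min_valid_step X w q ->
  (forall (x : nat -> A) (z : list A), X x -> exit_word X w q z ->
      Dens K w x >= / INR (3 * K + 9) * Dens K z x) /\
  (forall l : list (list A), NoDup l -> (forall z, In z l <-> exit_word X w q z) ->
      l <> [] ->
      forall x : nat -> A, X x ->
        exists z', exit_word X w q z' /\
          Dens K z' x >= / INR ((2 * K + 3) * length l) * Dens K w x).
Proof.
  intros HX Htr _ _ _ _ [[[_ [Hq [H2q Hper]]] _] _].
  split.
  - intros x z _ Hz. apply exit_word_iff in Hz as [Hz _].
    apply Rle_ge, (density_w_ge_exit K x Hper Hq H2q Hz).
  - intros l _ Hl Hne x Hx.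
    assert (Hl' : forall z, In z l <-> exit_shape w q z /\ lang X z)
      by (intros z; rewrite Hl; apply exit_word_iff).
    destruct (density_exit_ge_w K x HX Htr Hper Hq H2q Hl' Hne Hx) as [z' [Hz' Hle]].
    exists z'. split; [apply Hl, Hz'|]. apply Rle_ge.
    assert (HD : 0 <= Dens K z' x) by apply (density_spec (rsum K z' x) (rsum_le K z' x)).
    assert (Hpos : 0 < 3 * INR (length l)).
    { destruct l as [|z0 l0]; [congruence|]. simpl length. rewrite S_INR.
      pose proof (pos_INR (length l0)). lra. }
    assert (Hconst : 3 * INR (length l) <= INR ((2 * K + 3) * length l)).
    { rewrite mult_INR, plus_INR, mult_INR. pose proof (pos_INR K).
      pose proof (pos_INR (length l)). simpl (INR 2). simpl (INR 3). nra. }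
    exact (shrink_factor Hle HD Hpos Hconst).
Qed.
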